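(* Let $\mathbb G=V_1\times V_2$ be a step-two Carnot group that has $\mathbb F_3$ as one of its quotients, i.e. there is a surjective Carnot morphism $\mathbb G\to\mathbb F_3$. Then $\mathcal A(V_1\times V_2)\subsetneq\mathcal A_h(\mathbb G)$.
   Context: A step-two Carnot group is $\mathbb G=V_1\times V_2$ ($V_1,V_2$ finite-dimensional real vector spaces, $V_2\ne\{0\}$) with a bilinear skew-symmetric $[\cdot,\cdot]:V_1\times V_1\to V_2$ whose image spans $V_2$, and group law $(x,z)\cdot(x',z')=(x+x',z+z'+[x,x'])$. $\mathbb F_3=\Lambda^1(\mathbb R^3)\times\Lambda^2(\mathbb R^3)$ with bracket $[\theta,\theta']=\theta\wedge\theta'$. A Carnot morphism $\pi:\mathbb G\to\mathbb G'$ is $\pi(x,z)=(\pi_1(x),\pi_2(z))$ with $\pi_1,\pi_2$ linear and $\pi_2([x,y])=[\pi_1(x),\pi_1(y)]'$. $\mathcal A_h(\mathbb G)$ is the space of maps $f:\mathbb G\to\mathbb R$ such that for all $(x,z)\in\mathbb G$, $y\in V_1$, $t\mapsto f((x,z)\cdot(ty,0))$ is affine; $\mathcal A(V_1\times V_2)$ is the space of maps affine in the usual sense on $V_1\times V_2$ (always a subspace of $\mathcal A_h(\mathbb G)$). *)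

From HB Require Import structures.
From mathcomp Require Import all_boot all_order all_algebra.
From mathcomp Require Export reals.
Set Implicit Arguments. Unset Strict Implicit. Unset Printing Implicit Defensive.
Import Order.TTheory GRing.Theory Num.Theory.
Local Open Scope ring_scope.

Definition is_carnot_bracket (R : realType) (n1 n2 : nat)
  (br : 'rV[R]_n1 -> 'rV[R]_n1 -> 'rV[R]_n2) : Prop :=
  [/\ (0 < n2)%N,
      (forall (a : R) x y w, br (a *: x + y) w = a *: br x w + br y w),
      (forall (a : R) x y w, br w (a *: x + y) = a *: br w x + br w y),
      (forall x y, br x y = - br y x) &
      (forall z : 'rV[R]_n2, exists k : nat, exists c : 'I_k -> R,
         exists xs ys : 'I_k -> 'rV[R]_n1,
           z = \sum_(i < k) c i *: br (xs i) (ys i))].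

Definition cmul (R : realType) (n1 n2 : nat)
  (br : 'rV[R]_n1 -> 'rV[R]_n1 -> 'rV[R]_n2)
  (p q : 'rV[R]_n1 * 'rV[R]_n2) : 'rV[R]_n1 * 'rV[R]_n2 :=
  (p.1 + q.1, p.2 + q.2 + br p.1 q.1).

(* F_3 = Lambda^1(R^3) x Lambda^2(R^3); a 1-form has coordinates in the basis
   (e1,e2,e3), a 2-form in the basis (e1^e2, e1^e3, e2^e3). *)
Definition wedge3 (R : realType) (u v : 'rV[R]_3) : 'rV[R]_3 :=
  \row_(k < 3)
    (if k == 0 :> nat then u 0 0 * v 0 1 - u 0 1 * v 0 0
     else if k == 1 :> nat then u 0 0 * v 0 2 - u 0 2 * v 0 0
     else u 0 1 * v 0 2 - u 0 2 * v 0 1).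

Definition carnot_morphism (R : realType) (n1 n2 m1 m2 : nat)
  (br : 'rV[R]_n1 -> 'rV[R]_n1 -> 'rV[R]_n2)
  (br' : 'rV[R]_m1 -> 'rV[R]_m1 -> 'rV[R]_m2)
  (p1 : {linear 'rV[R]_n1 -> 'rV[R]_m1}) (p2 : {linear 'rV[R]_n2 -> 'rV[R]_m2}) : Prop :=
  forall x y, p2 (br x y) = br' (p1 x) (p1 y).

Definition carnot_map (R : realType) (n1 n2 m1 m2 : nat)
  (p1 : 'rV[R]_n1 -> 'rV[R]_m1) (p2 : 'rV[R]_n2 -> 'rV[R]_m2)
  (p : 'rV[R]_n1 * 'rV[R]_n2) : 'rV[R]_m1 * 'rV[R]_m2 := (p1 p.1, p2 p.2).

Definition affine1 (R : realType) (g : R -> R) : Prop :=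
  exists a b : R, forall t, g t = a * t + b.

Definition horiz_affine (R : realType) (n1 n2 : nat)
  (br : 'rV[R]_n1 -> 'rV[R]_n1 -> 'rV[R]_n2)
  (f : 'rV[R]_n1 * 'rV[R]_n2 -> R) : Prop :=
  forall (p : 'rV[R]_n1 * 'rV[R]_n2) (y : 'rV[R]_n1),
    affine1 (fun t : R => f (cmul br p (t *: y, 0))).

Definition usual_affine (R : realType) (n1 n2 : nat)
  (f : 'rV[R]_n1 * 'rV[R]_n2 -> R) : Prop :=
  forall (l : R) (p q : 'rV[R]_n1 * 'rV[R]_n2),
    f (l *: p.1 + (1 - l) *: q.1, l *: p.2 + (1 - l) *: q.2)
    = l * f p + (1 - l) * f q.

Definition surj (A B : Type) (f : A -> B) : Prop := forall b, exists a, f a = b.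

From HB Require Import structures.
From mathcomp Require Import all_boot all_order all_algebra reals.
From mathcomp Require Import ring lra.
Set Implicit Arguments. Unset Strict Implicit. Unset Printing Implicit Defensive.
Import Order.TTheory GRing.Theory Num.Theory.
Local Open Scope ring_scope.

(* Horizontal lines t |-> p.(ty, 0) = (x + ty, z + t[x,y]) are affine lines of
   V1 x V2, so usual affine maps are horizontally affine.  On F_3,
   the quadratic map (theta, omega) |-> theta /\ omega is horizontally affine,
   because along a horizontal line its t^2 coefficient is y /\ (x /\ y) = 0; it
   is not affine.  Composing it with the surjective Carnot morphism G -> F_3,
   which maps horizontal lines to horizontal lines, gives a horizontally affine
   map on G that is not affine, since affinity would descend through the
   surjective linear map. *)

Lemma carnot_bracketZr (R : realType) (n1 n2 : nat)
  (br : 'rV[R]_n1 -> 'rV[R]_n1 -> 'rV[R]_n2) :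
  is_carnot_bracket br -> forall w (t : R) y, br w (t *: y) = t *: br w y.
Proof.
case=> _ _ brDr _ _ w t y.
have br0r : br w 0 = 0.
  have := brDr 1 0 0 w; rewrite !scale1r addr0 => E.
  by apply: (addrI (br w 0)); rewrite addr0 -E.
by have := brDr t y 0 w; rewrite !addr0 br0r addr0.
Qed.

Lemma usual_affine_line (R : realType) (n1 n2 : nat)
  (f : 'rV[R]_n1 * 'rV[R]_n2 -> R) p u v :
  usual_affine f -> affine1 (fun t => f (p.1 + t *: u, p.2 + t *: v)).
Proof.
move=> faff; exists (f (p.1 + u, p.2 + v) - f p), (f p) => t.
have shift n (w w0 : 'rV[R]_n) : t *: (w0 + w) + (1 - t) *: w0 = w0 + t *: w.
  by rewrite scalerDr scalerBl scale1r addrC addrA subrK.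
have := faff t (p.1 + u, p.2 + v) p; rewrite /= !shift => ->.
ring.
Qed.

Lemma usual_affine_horiz_affine (R : realType) (n1 n2 : nat)
  (br : 'rV[R]_n1 -> 'rV[R]_n1 -> 'rV[R]_n2) (f : 'rV[R]_n1 * 'rV[R]_n2 -> R) :
  (forall w (t : R) y, br w (t *: y) = t *: br w y) ->
  usual_affine f -> horiz_affine br f.
Proof.
move=> brZr faff p y.
have [a [b line]] := usual_affine_line p y (br p.1 y) faff.
by exists a, b => t; rewrite -line /cmul /= addr0 brZr.
Qed.

Lemma carnot_mapM (R : realType) (n1 n2 m1 m2 : nat)
  (br : 'rV[R]_n1 -> 'rV[R]_n1 -> 'rV[R]_n2)
  (br' : 'rV[R]_m1 -> 'rV[R]_m1 -> 'rV[R]_m2)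
  (p1 : {linear 'rV[R]_n1 -> 'rV[R]_m1}) (p2 : {linear 'rV[R]_n2 -> 'rV[R]_m2}) :
  carnot_morphism br br' p1 p2 -> forall p q,
  carnot_map p1 p2 (cmul br p q)
  = cmul br' (carnot_map p1 p2 p) (carnot_map p1 p2 q).
Proof. by move=> pmorph p q; rewrite /carnot_map /cmul /= !linearD pmorph. Qed.

Lemma horiz_affine_comp (R : realType) (n1 n2 m1 m2 : nat)
  (br : 'rV[R]_n1 -> 'rV[R]_n1 -> 'rV[R]_n2)
  (br' : 'rV[R]_m1 -> 'rV[R]_m1 -> 'rV[R]_m2)
  (p1 : {linear 'rV[R]_n1 -> 'rV[R]_m1}) (p2 : {linear 'rV[R]_n2 -> 'rV[R]_m2})
  (f : 'rV[R]_m1 * 'rV[R]_m2 -> R) :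
  carnot_morphism br br' p1 p2 -> horiz_affine br' f ->
  horiz_affine br (f \o carnot_map p1 p2).
Proof.
move=> pmorph faff p y.
have [a [b line]] := faff (carnot_map p1 p2 p) (p1 y).
exists a, b => t; rewrite /= (carnot_mapM pmorph) -line.
by rewrite /carnot_map /= linearZ linear0.
Qed.

Lemma usual_affine_comp_surj (R : realType) (n1 n2 m1 m2 : nat)
  (p1 : {linear 'rV[R]_n1 -> 'rV[R]_m1}) (p2 : {linear 'rV[R]_n2 -> 'rV[R]_m2})
  (f : 'rV[R]_m1 * 'rV[R]_m2 -> R) :
  surj (carnot_map p1 p2) -> usual_affine (f \o carnot_map p1 p2) ->
  usual_affine f.
Proof.
move=> psurj faff l P Q.
have [p <-] := psurj P; have [q <-] := psurj Q.
have := faff l p q; rewrite /= /carnot_map /= => <-.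
by rewrite !linearD !linearZ.
Qed.

(* The e1/\e2/\e3 coefficient of theta /\ omega, for omega written in the basis
   (e1/\e2, e1/\e3, e2/\e3) used by wedge3. *)
Definition top_wedge (R : realType) (x z : 'rV[R]_3) : R :=
  x 0 0 * z 0 2 - x 0 1 * z 0 1 + x 0 2 * z 0 0.

Lemma top_wedge_horiz_affine (R : realType) :
  horiz_affine (@wedge3 R) (fun q => top_wedge q.1 q.2).
Proof.
move=> p y; set g := fun t => _.
exists (g 1 - g 0), (g 0) => t.
rewrite /g /cmul /top_wedge /wedge3 /= !mxE /=.
ring.
Qed.

Lemma top_wedge_not_usual_affine (R : realType) :
  ~ usual_affine (fun q : 'rV[R]_3 * 'rV[R]_3 => top_wedge q.1 q.2).
Proof.
pose e i : 'rV[R]_3 := \row_(k < 3) (k == i :> nat)%:R.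
move=> /(_ 2 (e 0%N, e 2%N) (0, 0)).
by rewrite /= !scaler0 !addr0 /top_wedge /e !mxE /=; lra.
Qed.

Theorem corollary6p6 (R : realType) (n1 n2 : nat)
  (br : 'rV[R]_n1 -> 'rV[R]_n1 -> 'rV[R]_n2) :
  is_carnot_bracket br ->
  (exists (p1 : {linear 'rV[R]_n1 -> 'rV[R]_3})
          (p2 : {linear 'rV[R]_n2 -> 'rV[R]_3}),
     carnot_morphism br (@wedge3 R) p1 p2 /\ surj (carnot_map p1 p2)) ->
  (forall f : 'rV[R]_n1 * 'rV[R]_n2 -> R,
     usual_affine f -> horiz_affine br f) /\
  (exists f : 'rV[R]_n1 * 'rV[R]_n2 -> R,
     horiz_affine br f /\ ~ usual_affine f).
Proof.
move=> brG [p1 [p2 [pmorph psurj]]]; split.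
  by move=> f; apply: usual_affine_horiz_affine; apply: carnot_bracketZr.
exists ((fun q => top_wedge q.1 q.2) \o carnot_map p1 p2); split.
  exact: horiz_affine_comp pmorph (@top_wedge_horiz_affine R).
by move/(usual_affine_comp_surj psurj); apply: top_wedge_not_usual_affine.
Qed.
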